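(* Let $(W,S)$ be a hyperbolic reflection group in $\mathbb{H}^n$ with a convex polytope $P$ as fundamental domain, and let $R$ be its set of reflections. Then the set $\mathcal{H}_\infty=\{\gamma(\infty)\mid \gamma\subseteq H_r\text{ a geodesic ray},\ r\in R\}$ is dense in $\partial\mathbb{H}^n$.
   Context: $(W,S)$ is a discrete group generated by the set $S$ of reflections across the walls of a Coxeter polyhedron $P$ (a convex polyhedron whose intersecting bounding hyperplanes meet at dihedral angles that are submultiples of $\pi$), with $P$ a strict fundamental domain, and whose Coxeter system does not split as a direct product of spherical and affine reflection groups. A convex polytope (possibly with ideal vertices) is, in the hyperboloid model $\mathbb{H}^n\subseteq\mathbb{R}^{n,1}$, the intersection of $\mathbb{H}^n$ with a convex polyhedral cone contained in $\{v\mid\langle v|v\rangle\le0,\ v_{n+1}>0\}$. $R=\{wsw^{-1}\mid w\in W,s\in S\}$ and $H_r$ is the hyperplane fixed by $r$. $\partial\mathbb{H}^n$ is the visual boundary with the cone topology and $\gamma(\infty)$ the endpoint of a ray $\gamma$. *)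

From HB Require Import structures.
From mathcomp Require Import all_boot all_order all_algebra.
From mathcomp Require Import all_classical all_reals all_analysis.
Set Implicit Arguments. Unset Strict Implicit. Unset Printing Implicit Defensive.
Import Order.TTheory GRing.Theory Num.Theory.
Import numFieldNormedType.Exports.
Local Open Scope classical_set_scope.
Local Open Scope ring_scope.

Section Hyperboloid.
Variables (R : realType) (n : nat).
Notation V := 'rV[R]_(n.+1).

Definition lastc (x : V) : R := x 0 ord_max.

Definition lor (x y : V) : R :=
  \sum_(i < n) x 0 (widen_ord (leqnSn n) i) * y 0 (widen_ord (leqnSn n) i)
  - lastc x * lastc y.

Definition Hyp : set V := [set x | lor x x = -1 /\ 0 < lastc x].

(* visual boundary dH^n, realised as the null vectors normalised by x_{n+1} = 1
   (the sphere at infinity of the projective/Klein model), with the topology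
   induced from R^{n+1}: this is the cone topology. *)
Definition Bdry : set V := [set x | lor x x = 0 /\ lastc x = 1].

Definition refl (v : V) (x : V) : V := x - ((2 * lor x v) / lor v v) *: v.

(* convex polytope (possibly with ideal vertices): intersection of H^n with a
   polyhedral cone {v | <v|e_i> <= 0 for all i} contained (apart from 0) in
   {<v|v> <= 0, v_{n+1} > 0}; the polytope has nonempty interior. *)
Definition polyCone k (e : 'I_k -> V) : set V := [set v | forall i, lor v (e i) <= 0].
Definition polytope k (e : 'I_k -> V) : set V := Hyp `&` polyCone e.

Definition is_convex_polytope k (e : 'I_k -> V) : Prop :=
  (forall i, 0 < lor (e i) (e i)) /\
  (forall v, v != 0 -> polyCone e v -> lor v v <= 0 /\ 0 < lastc v) /\
  (exists x, Hyp x /\ forall i, lor x (e i) < 0).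

(* elements of W = <S>: products of the wall reflections s_i = refl (e i)
   (each s_i is an involution, so these words form the generated group) *)
Definition word k (e : 'I_k -> V) (s : seq 'I_k) : V -> V :=
  foldr (fun i f => refl (e i) \o f) id s.

Definition strict_fundamental_domain k (e : 'I_k -> V) : Prop :=
  (forall x, Hyp x -> exists s y, polytope e y /\ x = word e s y) /\
  (forall s x, polytope e x -> polytope e (word e s x) -> word e s x = x).

(* the set R of reflections w s w^{-1}, w in W, s in S
   (w^{-1} is the reversed word) *)
Definition reflections k (e : 'I_k -> V) : set (V -> V) :=
  [set r | exists (s : seq 'I_k) (i : 'I_k),
     r = word e s \o refl (e i) \o word e (rev s)].

Definition fixhyp (r : V -> V) : set V := [set x | Hyp x /\ r x = x].

Definition cosh (t : R) : R := (expR t + expR (- t)) / 2.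
Definition sinh (t : R) : R := (expR t - expR (- t)) / 2.
Definition ray (p u : V) (t : R) : V := cosh t *: p + sinh t *: u.
Definition is_ray (p u : V) : Prop := Hyp p /\ lor u u = 1 /\ lor p u = 0.

Definition endpoint (p u : V) : V := (lastc (p + u))^-1 *: (p + u).

Definition Hinfty k (e : 'I_k -> V) : set V :=
  [set xi | exists r p u, reflections e r /\ is_ray p u /\
     (forall t, 0 <= t -> fixhyp r (ray p u t)) /\ xi = endpoint p u].

End Hyperboloid.

From HB Require Import structures.
From mathcomp Require Import all_boot all_order all_algebra.
From mathcomp Require Import all_classical all_reals all_analysis.
From mathcomp Require Import ring lra.
Import Order.TTheory GRing.Theory Num.Theory.
Import numFieldNormedType.Exports.
Local Open Scope classical_set_scope.
Local Open Scope ring_scope.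
Set Implicit Arguments. Unset Strict Implicit. Unset Printing Implicit Defensive.

(* Given xi in the boundary and eps > 0, move xi along a small circle of the
   boundary to a nearby point xi'. The chord vector m = xi + xi' is future
   timelike, so its ray meets H^n in some translate wP of the fundamental
   polytope: m is on the nonpositive side of every wall w(e_i)^perp of wP. On the other
   hand the cone over wP contains no nonzero null vector in its interior, so xi
   is on the nonnegative side of one of these walls, and then xi' is on its
   nonpositive side. By the intermediate value theorem the arc from xi to xi'
   meets the boundary of the mirror H_r of r = w s_i w^-1 within eps of xi, and
   every boundary point of a hyperplane is the endpoint of a ray inside it. *)

Section Lorentz.
Variables (R : realType) (n : nat).
Notation V := 'rV[R]_(n.+1).
Implicit Types (x y z v w p u m : V) (t : R).

Lemma lorC x y : lor x y = lor y x.
Proof.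
rewrite /lor /lastc mulrC; congr (_ - _).
by apply: eq_bigr => i _; rewrite mulrC.
Qed.

Lemma lorDl x y z : lor (x + y) z = lor x z + lor y z.
Proof.
rewrite /lor /lastc mxE mulrDl.
under eq_bigr do rewrite mxE mulrDl.
rewrite big_split /=; ring.
Qed.

Lemma lorZl a x z : lor (a *: x) z = a * lor x z.
Proof.
rewrite /lor /lastc mxE -mulrA.
under eq_bigr do rewrite mxE -mulrA.
rewrite -mulr_sumr; ring.
Qed.

Lemma lorBl x y z : lor (x - y) z = lor x z - lor y z.
Proof. by rewrite lorDl -scaleN1r lorZl mulN1r. Qed.

Lemma lor0l z : lor 0 z = 0.
Proof. by rewrite -(scale0r (0 : V)) lorZl mul0r. Qed.

Lemma lorDr x y z : lor z (x + y) = lor z x + lor z y.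
Proof. by rewrite lorC lorDl !(lorC z). Qed.

Lemma lorZr a x z : lor z (a *: x) = a * lor z x.
Proof. by rewrite lorC lorZl lorC. Qed.

Lemma lorBr x y z : lor z (x - y) = lor z x - lor z y.
Proof. by rewrite lorC lorBl !(lorC z). Qed.

Lemma lastcD x y : lastc (x + y) = lastc x + lastc y.
Proof. by rewrite /lastc mxE. Qed.

Lemma lastcZ a x : lastc (a *: x) = a * lastc x.
Proof. by rewrite /lastc mxE. Qed.

Lemma lastcB x y : lastc (x - y) = lastc x - lastc y.
Proof. by rewrite /lastc !mxE. Qed.

Lemma lor_ge0_lastc0 y : lastc y = 0 -> 0 <= lor y y.
Proof.
by move=> y0; rewrite /lor y0 mulr0 subr0 sumr_ge0 // => i _; rewrite -expr2 sqr_ge0.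
Qed.

Lemma lastc_gt0_timelike x z : lor x x < 0 -> lor z z = 0 -> 0 < lastc z ->
  lor x z < 0 -> 0 < lastc x.
Proof.
move=> xx zz z0 xz; rewrite ltNge; apply/negP => x0.
pose c := - lastc x / lastc z.
have c0 : 0 <= c by rewrite /c mulr_ge0 ?oppr_ge0 ?invr_ge0 // ltW.
have : lastc (x + c *: z) = 0.
  by rewrite lastcD lastcZ /c mulrAC -mulrA divff ?mulr1 ?subrr ?gt_eqF.
move/lor_ge0_lastc0; rewrite !(lorDl, lorDr, lorZl, lorZr) zz (lorC z x).
have : c * lor x z <= 0 by rewrite mulr_ge0_le0 // ltW.
lra.
Qed.

Lemma Hyp_timelike m : lor m m < 0 -> 0 < lastc m -> exists2 c, 0 < c & Hyp (c *: m).
Proof.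
move=> mm m0; pose N := Num.sqrt (- lor m m).
have N0 : 0 < N by rewrite sqrtr_gt0 oppr_gt0.
have NN : N ^+ 2 = - lor m m by rewrite sqr_sqrtr // oppr_ge0 ltW.
exists N^-1; rewrite ?invr_gt0 //; split; last by rewrite lastcZ mulr_gt0 ?invr_gt0.
by rewrite lorZl lorZr mulrA -expr2 exprVn NN invrN mulNr mulVf // lt_eqF.
Qed.

Definition origin : V := \row_j (j == ord_max)%:R.

Lemma lastc_origin : lastc origin = 1.
Proof. by rewrite /lastc mxE eqxx. Qed.

Lemma lor_originl x : lor origin x = - lastc x.
Proof.
rewrite /lor big1 ?sub0r ?lastc_origin ?mul1r // => i _.
by rewrite mxE -val_eqE /= ltn_eqF // mul0r.
Qed.

Lemma lor_originr x : lor x origin = - lastc x.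
Proof. by rewrite lorC lor_originl. Qed.

Lemma lor_origin_origin : lor origin origin = -1.
Proof. by rewrite lor_originl lastc_origin. Qed.

Lemma ord_split (j : 'I_n.+1) :
  j = ord_max \/ exists i : 'I_n, j = widen_ord (leqnSn n) i.
Proof.
have [->|jn] := eqVneq j ord_max; [by left | right].
have jlt : (j < n)%N.
  rewrite ltn_neqAle -ltnS ltn_ord andbT.
  by apply: contra jn => /eqP jn; apply/eqP/val_inj.
by exists (Ordinal jlt); apply: val_inj.
Qed.

Lemma null_lastc0 y : lor y y = 0 -> lastc y = 0 -> y = 0.
Proof.
rewrite /lor => + y0; rewrite y0 mulr0 subr0.
move/psumr_eq0P => yy; apply/rowP => j; rewrite mxE.
case: (ord_split j) => [->|[i ->]]; first exact: y0.
have /eqP := yy (fun i _ => sqr_ge0 _) i isT.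
by rewrite -expr2 sqrf_eq0 => /eqP.
Qed.

Lemma normr_coord_le1 y j : lastc y = 0 -> lor y y = 1 -> `|y 0 j| <= 1.
Proof.
rewrite /lor => y0; rewrite y0 mulr0 subr0 => yy.
case: (ord_split j) => [->|[i ->]]; first by rewrite -/(lastc y) y0 normr0 ler01.
rewrite -(expr_le1 (n := 2)) // real_normK ?num_real // -yy (bigD1 i) //= expr2 lerDl.
by rewrite sumr_ge0 // => l _; rewrite -expr2 sqr_ge0.
Qed.

Definition ebase (j : 'I_n.+1) : V := \row_l (l == j)%:R.

Lemma lor_ebasel (i : 'I_n) x :
  lor (ebase (widen_ord (leqnSn n) i)) x = x 0 (widen_ord (leqnSn n) i).
Proof.
rewrite /lor (bigD1 i) //= big1 => [|l li]; last first.
  by rewrite mxE -val_eqE /= val_eqE (negbTE li) mul0r.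
by rewrite /lastc !mxE eqxx -val_eqE /= gtn_eqF // mul1r mul0r addr0 subr0.
Qed.

Lemma lastc_ebase (i : 'I_n) : lastc (ebase (widen_ord (leqnSn n) i)) = 0.
Proof. by rewrite /lastc mxE -val_eqE /= gtn_eqF. Qed.

Lemma exists_orthogonal_unit (a : V) : (2 <= n)%N -> lastc a = 0 ->
  exists b : V, [/\ lastc b = 0, lor b b = 1 & lor a b = 0].
Proof.
move=> n2 a0.
pose e0 := ebase (widen_ord (leqnSn n) (Ordinal (ltnW n2))).
pose e1 := ebase (widen_ord (leqnSn n) (Ordinal n2)).
have e01 : lor e0 e1 = 0 by rewrite lor_ebasel mxE.
have e00 : lor e0 e0 = 1 by rewrite lor_ebasel mxE eqxx.
have e11 : lor e1 e1 = 1 by rewrite lor_ebasel mxE eqxx.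
pose al := lor a e0; pose be := lor a e1.
have [al0|al0] := eqVneq al 0.
  by exists e0; split; rewrite ?lastc_ebase.
pose w := be *: e0 - al *: e1.
have ww : 0 < lor w w.
  rewrite /w !(lorBl, lorBr, lorZl, lorZr) e00 e11 e01 (lorC e1) e01.
  have : 0 < al ^+ 2 by rewrite exprn_even_gt0.
  have := sqr_ge0 be; rewrite !expr2; lra.
pose N := Num.sqrt (lor w w).
have N0 : 0 < N by rewrite sqrtr_gt0.
have NN : N ^+ 2 = lor w w by rewrite sqr_sqrtr // ltW.
exists (N^-1 *: w); split.
- by rewrite lastcZ lastcB !lastcZ !lastc_ebase !mulr0 subr0 mulr0.
- by rewrite lorZl lorZr mulrA -expr2 exprVn NN mulVf // gt_eqF.
- by rewrite lorZr lorBr !lorZr -/al -/be (mulrC al) subrr mulr0.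
Qed.


Lemma refl_id v x : lor x v = 0 -> refl v x = x.
Proof. by move=> xv; rewrite /refl xv mulr0 mul0r scale0r subr0. Qed.

Lemma lor_refl v x y : lor v v != 0 -> lor (refl v x) (refl v y) = lor x y.
Proof.
by move=> vv; rewrite /refl !(lorBl, lorBr, lorZl, lorZr) (lorC v y); field.
Qed.

Lemma reflK v : lor v v != 0 -> involutive (refl v).
Proof.
move=> vv x; have xv : lor (refl v x) v = - lor x v.
  by rewrite /refl lorBl lorZl; field.
by apply/rowP => j; rewrite {1}/refl xv /refl !mxE; field.
Qed.

Section Words.
Variables (k : nat) (e : 'I_k -> V).
Hypothesis e_nondeg : forall i, lor (e i) (e i) != 0.

Lemma word_rcons s i x : word e (rcons s i) x = word e s (refl (e i) x).
Proof. by elim: s => //= j s IH; rewrite /comp IH. Qed.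

Lemma word0 s : word e s 0 = 0.
Proof. by elim: s => //= j s IH; rewrite /comp IH refl_id // lor0l. Qed.

Lemma lor_word s x y : lor (word e s x) (word e s y) = lor x y.
Proof. by elim: s => //= j s IH; rewrite /comp lor_refl. Qed.

Lemma word_revK s : cancel (word e (rev s)) (word e s).
Proof.
by elim: s => //= j s IH x; rewrite rev_cons word_rcons /comp IH reflK.
Qed.

Lemma lor_word_rev s x y : lor (word e (rev s) x) y = lor x (word e s y).
Proof. by rewrite -(lor_word s) word_revK. Qed.

Lemma reflection_fix s i x : lor x (word e s (e i)) = 0 ->
  (word e s \o refl (e i) \o word e (rev s)) x = x.
Proof. by move=> xw; rewrite /comp refl_id ?word_revK // lor_word_rev. Qed.

End Words.

Lemma cosh2_sub_sinh2 t : cosh t ^+ 2 - sinh t ^+ 2 = 1.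
Proof.
rewrite /cosh /sinh expRN; have := expR_gt0 t; set a := expR t => a0.
by field; rewrite gt_eqF.
Qed.

Lemma cosh_sub_sinh t : cosh t - sinh t = expR (- t).
Proof. by rewrite /cosh /sinh; field. Qed.

Lemma sinh_ge0 t : 0 <= t -> 0 <= sinh t.
Proof. by move=> t0; rewrite /sinh divr_ge0 // subr_ge0 ler_expR; lra. Qed.

Lemma Hyp_ray p u t : is_ray p u -> 0 <= lastc (p + u) -> 0 <= t ->
  Hyp (ray p u t).
Proof.
move=> [[pp p0] [uu pu]] pu0 t0; split.
  rewrite /ray !(lorDl, lorDr, lorZl, lorZr) pp uu pu (lorC u p) pu.
  have := cosh2_sub_sinh2 t; lra.
have -> : lastc (ray p u t) =
    (cosh t - sinh t) * lastc p + sinh t * lastc (p + u).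
  by rewrite /ray !lastcD !lastcZ; ring.
rewrite cosh_sub_sinh.
have := mulr_gt0 (expR_gt0 (- t)) p0; have := mulr_ge0 (sinh_ge0 t0) pu0; lra.
Qed.

Lemma ray_to_null p z : Hyp p -> lor z z = 0 -> lor p z < 0 ->
  exists2 c, 0 < c & is_ray p (c *: z - p).
Proof.
move=> [pp p0] zz pz; exists (- (lor p z)^-1); first by rewrite oppr_gt0 invr_lt0.
split; first by [].
split; rewrite !(lorBl, lorBr, lorZl, lorZr) ?zz pp ?(lorC z p);
  by field; rewrite lt_eqF.
Qed.

Lemma hyperplane_ray v z : 0 < lor v v -> Bdry z -> lor z v = 0 ->
  exists p u, [/\ is_ray p u,
    forall t, 0 <= t -> Hyp (ray p u t) /\ lor (ray p u t) v = 0
    & z = endpoint p u].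
Proof.
move=> vv [zz z1] zv.
pose q := origin - (lor origin v / lor v v) *: v.
have qv : lor q v = 0 by rewrite /q lorBl lorZl; field; rewrite gt_eqF.
have qz : lor q z = -1 by rewrite /q lorBl lorZl (lorC v) zv lor_originl z1; ring.
have qq : lor q q < 0.
  have -> : lor q q = -1 - lor origin v ^+ 2 / lor v v.
    rewrite /q !(lorBl, lorBr, lorZl, lorZr) lor_origin_origin (lorC v).
    by field; rewrite gt_eqF.
  have := divr_ge0 (sqr_ge0 (lor origin v)) (ltW vv); lra.
have q0 : 0 < lastc q.
  by apply: (lastc_gt0_timelike (z := z)); rewrite ?qz ?z1 //; lra.
clearbody q; have [c c0 pHyp] := Hyp_timelike qq q0.
have pz : lor (c *: q) z < 0 by rewrite lorZl qz mulrN1 oppr_lt0.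
have [d d0 pu] := ray_to_null pHyp zz pz.
exists (c *: q), (d *: z - c *: q).
have pu_sum : c *: q + (d *: z - c *: q) = d *: z by rewrite addrC subrK.
split => // [t t0|]; last first.
  by rewrite /endpoint pu_sum lastcZ z1 mulr1 scalerA mulVf ?scale1r ?gt_eqF.
split; first by apply: Hyp_ray; rewrite // pu_sum lastcZ z1 mulr1 ltW.
by rewrite /ray !(lorBl, lorDl, lorZl) qv zv; ring.
Qed.

Lemma near0_affine_lt0 (a b : R) : a < 0 -> \forall t \near 0^'+, a + t * b < 0.
Proof.
move=> a0; have b1 : 0 < `|b| + 1 by rewrite ltr_pwDr.
near=> t.
have t0 : 0 < t by near: t; exact: nbhs_right_gt.
have : t < - a / (`|b| + 1) by near: t; apply: nbhs_right_lt; rewrite divr_gt0 ?oppr_gt0.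
rewrite ltr_pdivlMr // => ta.
have := ler_wpM2l (ltW t0) (ler_norm b); lra.
Unshelve. all: by end_near.
Qed.

Lemma null_interior_polyCone k (e : 'I_k -> V) z :
  (forall v, v != 0 -> polyCone e v -> lor v v <= 0 /\ 0 < lastc v) ->
  lor z z = 0 -> (forall i, lor z (e i) < 0) -> z = 0.
Proof.
move=> cone zz ze; have [//|z0] := eqVneq z 0; exfalso.
have lz0 : lastc z != 0 by apply: contra z0 => /eqP lz; rewrite (null_lastc0 zz lz).
(* Pushing z towards y makes it spacelike, lor = lastc z ^+ 2 * t * (2 - t),
   while it stays in the open cone. *)
pose y := - lastc z *: origin.
have zy : lor z y = lastc z ^+ 2 by rewrite lorZr lor_originr mulrNN expr2.
have yy : lor y y = - lastc z ^+ 2.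
  by rewrite lorZl lorZr lor_origin_origin expr2; ring.
clearbody y.
have : \forall t \near 0^'+, 0 < t < 1 /\
    forall i, lor z (e i) + t * lor y (e i) < 0.
  near=> t; split.
    by apply/andP; split; near: t; [exact: nbhs_right_gt | exact: nbhs_right_lt].
  by near: t; apply: filter_forall => i; exact: near0_affine_lt0.
case/filter_ex => t [/andP [t0 t1] tcone].
have vv : 0 < lor (z + t *: y) (z + t *: y).
  rewrite !(lorDl, lorDr, lorZl, lorZr) zz (lorC y z) zy yy.
  have : 0 < lastc z ^+ 2 by rewrite exprn_even_gt0.
  nra.
have [||v0 _] := cone (z + t *: y); last by move: vv; rewrite ltNge v0.
  by apply: contraTneq vv => ->; rewrite lor0l ltxx.
by rewrite /polyCone /= => i; rewrite lorDl lorZl ltW.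
Unshelve. all: by end_near.
Qed.

Definition covers k (e : 'I_k -> V) : Prop :=
  forall x, Hyp x -> exists s y, polytope e y /\ x = word e s y.

Lemma wall_between k (e : 'I_k -> V) m xi :
  is_convex_polytope e -> covers e -> lor m m < 0 -> 0 < lastc m ->
  lor xi xi = 0 -> xi != 0 ->
  exists s i, lor m (word e s (e i)) <= 0 <= lor xi (word e s (e i)).
Proof.
move=> [e_pos [cone _]] cov mm m0 xx xi0.
have e_nondeg i : lor (e i) (e i) != 0 by rewrite gt_eqF.
have [c c0 /cov [s [y [[_ y_cone] cmE]]]] := Hyp_timelike mm m0.
exists s.
have [/existsP [i xi_side]|/existsPn xi_neg] :=
  boolP [exists i, 0 <= lor xi (word e s (e i))].
  exists i; rewrite xi_side andbT.
  by have := y_cone i; rewrite -(lor_word e_nondeg s) -cmE lorZl pmulr_rle0.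
exfalso; move/negP: xi0; apply; apply/eqP.
have z0 : word e (rev s) xi = 0.
  apply: (null_interior_polyCone cone); first by rewrite lor_word.
  by move=> i; rewrite lor_word_rev // ltNge.
by rewrite -(word_revK e_nondeg s xi) z0 word0.
Qed.

(* Stereographic parametrisation of the circle of the boundary through
   origin + a (at t = 0) and origin + b (at t = 1). *)
Definition circ (a b : V) t : V :=
  origin + (1 + t ^+ 2)^-1 *: ((1 - t ^+ 2) *: a + (2 * t) *: b).

Lemma one_add_sqr_gt0 t : 0 < 1 + t ^+ 2.
Proof. by rewrite ltr_pwDl ?sqr_ge0. Qed.

Section Circle.
Variables a b : V.
Hypotheses (a0 : lastc a = 0) (b0 : lastc b = 0).
Hypotheses (aa : lor a a = 1) (bb : lor b b = 1) (ab : lor a b = 0).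

Lemma circ0 : circ a b 0 = origin + a.
Proof.
by rewrite /circ expr0n /= addr0 subr0 invr1 !scale1r mulr0 scale0r addr0.
Qed.

Lemma lastc_circ t : lastc (circ a b t) = 1.
Proof. by rewrite /circ !(lastcD, lastcZ) a0 b0 lastc_origin; ring. Qed.

Lemma lor_circl t w : lor (circ a b t) w =
  lor origin w + ((1 - t ^+ 2) * lor a w + 2 * t * lor b w) / (1 + t ^+ 2).
Proof.
have := one_add_sqr_gt0 t => t2.
by rewrite /circ !(lorDl, lorZl); field; rewrite gt_eqF.
Qed.

Lemma Bdry_circ t : Bdry (circ a b t).
Proof.
split; last exact: lastc_circ.
have := one_add_sqr_gt0 t => /lt0r_neq0 t2.
rewrite lor_circl !(lorC _ (circ a b t)) !lor_circl lor_origin_origin.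
rewrite !lor_originl !lor_originr a0 b0 (lorC b a) aa bb ab; by field.
Qed.

Lemma circ_chord_timelike t : t != 0 ->
  lor (circ a b 0 + circ a b t) (circ a b 0 + circ a b t) < 0.
Proof.
move=> t0; have := one_add_sqr_gt0 t => t2.
have [[x0x0 _] [xtxt _]] := (Bdry_circ 0, Bdry_circ t).
have cross : lor (circ a b t) (circ a b 0) = - (2 * t ^+ 2) / (1 + t ^+ 2).
  rewrite circ0 lor_circl !lorDr lor_origin_origin !lor_originl !lor_originr.
  by rewrite a0 b0 (lorC b a) aa ab; field; rewrite gt_eqF.
have : 0 < 2 * t ^+ 2 / (1 + t ^+ 2).
  by rewrite divr_gt0 // mulr_gt0 // exprn_even_gt0.
rewrite lorDl 2!lorDr x0x0 xtxt (lorC (circ a b 0)) cross mulNr; lra.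
Qed.

Lemma circ_crossing w t0 : 0 <= t0 ->
  0 <= lor (circ a b 0) w -> lor (circ a b t0) w <= 0 ->
  exists2 t, 0 <= t <= t0 & lor (circ a b t) w = 0.
Proof.
move=> t00 w0 wt0.
pose P : {poly R} := - ((lor origin w + lor a w)%:P + (2 * lor b w) *: 'X
  + (lor origin w - lor a w) *: 'X^2).
have PE t : P.[t] = - ((1 + t ^+ 2) * lor (circ a b t) w).
  have := one_add_sqr_gt0 t => /lt0r_neq0 t2.
  rewrite lor_circl /P hornerN !hornerD hornerC !hornerZ hornerX hornerXn; by field.
have [t /andP [t_ge0 t_le] tP] : exists2 t, 0 <= t <= t0 & root P t.
  apply: poly_ivt => //; rewrite !PE oppr_le0 oppr_ge0 mulr_ge0_le0 ?andbT //.
    by rewrite expr0n /= addr0 mul1r.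
  exact/ltW/one_add_sqr_gt0.
exists t; first by rewrite t_ge0.
move: tP; rewrite /root PE oppr_eq0 mulf_eq0 gt_eqF ?one_add_sqr_gt0 //=.
by move/eqP.
Qed.

Lemma dist_circ0 t j : 0 <= t <= 1 ->
  `|circ a b 0 0 j - circ a b t 0 j| <= 4 * t.
Proof.
move=> /andP [t0 t1]; have t2 := one_add_sqr_gt0 t.
have -> : circ a b 0 0 j - circ a b t 0 j =
    (2 * t ^+ 2 * a 0 j - 2 * t * b 0 j) / (1 + t ^+ 2).
  by rewrite circ0 /circ !mxE; field; rewrite gt_eqF.
rewrite normrM normfV (gtr0_norm t2) ler_pdivrMr // ler_norml.
have := normr_coord_le1 j a0 aa; have := normr_coord_le1 j b0 bb.
rewrite !ler_norml => /andP [b_ge b_le] /andP [a_ge a_le].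
have t_sqr : 0 <= t ^+ 2 by rewrite sqr_ge0.
have : 0 <= t ^+ 2 * (1 - a 0 j) by apply: mulr_ge0 => //; lra.
have : 0 <= t ^+ 2 * (1 + a 0 j) by apply: mulr_ge0 => //; lra.
have : 0 <= t * (1 - b 0 j) by apply: mulr_ge0 => //; lra.
have : 0 <= t * (1 + b 0 j) by apply: mulr_ge0 => //; lra.
have : 0 <= t * (1 - t) by apply: mulr_ge0 => //; lra.
have := mulr_ge0 t0 t_sqr.
rewrite expr2; nra.
Qed.

End Circle.

Lemma Bdry_near_wall k (e : 'I_k -> V) xi eps : (2 <= n)%N ->
  is_convex_polytope e -> covers e -> Bdry xi -> 0 < eps ->
  exists z s i, [/\ Bdry z, lor z (word e s (e i)) = 0
    & forall j, `|xi 0 j - z 0 j| < eps].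
Proof.
move=> n2 cp cov [xx xi1] eps0.
pose a := xi - origin.
have a0 : lastc a = 0 by rewrite lastcB xi1 lastc_origin subrr.
have aa : lor a a = 1.
  by rewrite !(lorBl, lorBr) xx lor_originl lor_originr xi1 lor_origin_origin; ring.
have [b [b0 bb ab]] := exists_orthogonal_unit n2 a0.
have -> : xi = circ a b 0 by rewrite circ0 addrC subrK.
have Bcirc := Bdry_circ a0 b0 aa bb ab.
pose t0 := Num.min 1 (eps / 8).
have t0_gt0 : 0 < t0 by rewrite lt_min ltr01 divr_gt0.
have t0_le1 : t0 <= 1 by rewrite ge_min lexx.
have t0_le_eps : t0 <= eps / 8 by rewrite ge_min lexx orbT.
have mm := circ_chord_timelike a0 b0 aa bb ab (lt0r_neq0 t0_gt0).
have m0 : 0 < lastc (circ a b 0 + circ a b t0).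
  by rewrite lastcD !(Bcirc _).2 addr_gt0.
have xi0 : circ a b 0 != 0.
  by apply: contra_eq_neq (Bcirc 0).2 => ->; rewrite /lastc mxE eq_sym oner_neq0.
have [s [i /andP [m_side xi_side]]] := wall_between cp cov mm m0 (Bcirc 0).1 xi0.
have xi'_side : lor (circ a b t0) (word e s (e i)) <= 0.
  by move: m_side; rewrite lorDl; lra.
have [t /andP [t_ge0 t_le] t_root] := circ_crossing (ltW t0_gt0) xi_side xi'_side.
exists (circ a b t), s, i; split=> // j.
apply: le_lt_trans (dist_circ0 a0 b0 aa bb j _) _; last by lra.
by rewrite t_ge0; lra.
Qed.

End Lorentz.

Unset Implicit Arguments.
Set Strict Implicit.

Theorem mainTheorem10 (R : realType) (n k : nat) (e : 'I_k -> 'rV[R]_(n.+1)) :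
  (2 <= n)%N ->
  is_convex_polytope e ->
  strict_fundamental_domain e ->
  @Bdry R n `<=` closure (Hinfty e).
Proof.
move=> n2 cp [cov _] xi xiB B /nbhs_ballP [eps eps0 epsB].
have [z [s [i [zB z_wall z_near]]]] := Bdry_near_wall n2 cp cov xiB eps0.
have e_nondeg l : lor (e l) (e l) != 0 by rewrite gt_eqF // cp.1.
have wall_pos : 0 < lor (word e s (e i)) (word e s (e i)) by rewrite lor_word // cp.1.
have [p [u [pu_ray ray_in zE]]] := hyperplane_ray wall_pos zB z_wall.
exists z; split.
  exists (word e s \o refl (e i) \o word e (rev s)), p, u.
  split; first by exists s, i.
  split=> //; split=> // t t0; have [tHyp t_wall] := ray_in t t0.
  by split=> //; apply: reflection_fix.
apply: epsB; split=> // i0 j.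
by rewrite (ord1 i0) -ball_normE /ball_ /=; exact: z_near.
Qed.
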